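(* Let $y_1,\dots,y_n\in\mathbb{R}^k$, $r\in\{1,\dots,n\}$, and let $\mathcal{A}_1,\dots,\mathcal{A}_m$ be a fixed partition of $\mathbb{R}^k$ into $m$ disjoint regions. For $R\in\mathrm{SO}(k)$, diagonal matrices $D_1,\dots,D_m\succcurlyeq 0$, exponents $p_1,\dots,p_m>0$ and $\mu\in\mathbb{R}^k$, define $$d(y,\mu;R,\{D_j\}_{j=1}^m)=\sum_{j=1}^m \mathds{1}\{R(y-\mu)\in\mathcal{A}_j\}\,\|RD_j(y-\mu)\|_{p_j},$$ and $V(\{p_j\},\{D_j\})=\frac{1}{m}\sum_{j=1}^m\lambda(B_{\|\cdot\|_{p_j}}(1))\det(D_j)^{-1}$. Consider $$\text{(A)}\quad \min\ V(\{p_j\},\{D_j\})\quad\text{s.t.}\ R\in\mathrm{SO}(k),\ \mu\in\mathbb{R}^k,\ D_j\in\mathrm{Diag}(k),\ D_j\succcurlyeq 0,\ p_j>0\ \forall j\in[m],\ \mathrm{Card}\{i\in[n]: d(y_i,\mu;R,\{D_j\})\le 1\}\ge n-r+1,$$ and $$\text{(B)}\quad \min\ k\log\big(\sigma_r\{d(y_i,\mu;R,\{D_j\})\}\big)+\log\Big(\sum_{j=1}^m\lambda(B_{\|\cdot\|_{p_j}}(1))\det(D_j)^{-1}\Big)\quad\text{s.t.}\ R\in\mathrm{SO}(k),\ \mu\in\mathbb{R}^k,\ D_j\in\mathrm{Diag}(k),\ D_j\succcurlyeq 0,\ p_j>0\ \forall j\in[m].$$ Then problems (A) and (B) are equivale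nt.
   Context: $\mathrm{SO}(k)=\{R\in\mathbb{R}^{k\times k}: R^\top R=I,\ \det R=1\}$; $\mathrm{Diag}(k)$ is the set of diagonal $k\times k$ matrices. For $p>0$, $\|z\|_p=(\sum_j|z_j|^p)^{1/p}$ and $\lambda(B_{\|\cdot\|_p}(1))=\frac{2^k\Gamma(1+1/p)^k}{\Gamma(1+k/p)}$ is the Lebesgue measure of the unit $\|\cdot\|_p$-ball in $\mathbb{R}^k$. $\det(D)^{-1}$ is $+\infty$ for singular $D$. $\mathds{1}\{\cdot\}$ is the indicator function. For reals $a_1,\dots,a_n$, $\sigma_r\{a_i\}$ denotes the $r$-th largest of them. The quantity $V$ is the paper's definition of the volume of the multi-norm set $\{y: d(y,\mu;R,\{D_j\})\le 1\}$. *)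

From HB Require Import structures.
From mathcomp Require Import all_boot all_order all_algebra.
From mathcomp Require Import all_classical all_reals all_analysis.
Set Implicit Arguments. Unset Strict Implicit. Unset Printing Implicit Defensive.
Import Order.TTheory GRing.Theory Num.Theory.
Import numFieldNormedType.Exports.
Local Open Scope classical_set_scope.
Local Open Scope ring_scope.

Section Defs.
Variable R : realType.

Definition Gamma (s : R) : R :=
  Rintegral lebesgue_measure `[0%R, +oo[%classic (fun t : R => t `^ (s - 1) * expR (- t)).

(* Lebesgue measure of the unit ||.||_p ball in R^k *)
Definition ballvol (k : nat) (p : R) : R :=
  2 ^+ k * Gamma (1 + p^-1) ^+ k / Gamma (1 + k%:R / p).

Definition pnorm (k : nat) (p : R) (z : 'cV[R]_k) : R :=
  (\sum_(i < k) `|z i 0| `^ p) `^ p^-1.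

Definition SO (k : nat) : set 'M[R]_k :=
  [set Q | Q^T *m Q = 1%:M /\ \det Q = 1].

Definition psd_diag (k : nat) (D : 'M[R]_k) : Prop :=
  is_diag_mx D /\ forall i, 0 <= D i i.

Definition detinv (k : nat) (D : 'M[R]_k) : \bar R :=
  if \det D == 0 then +oo%E else ((\det D)^-1)%:E.

Record params (k m : nat) := Params {
  rot : 'M[R]_k ; ctr : 'cV[R]_k ; dmx : 'I_m -> 'M[R]_k ; expo : 'I_m -> R }.

Variables (k m : nat) (A : 'I_m -> set 'cV[R]_k).

Definition dist (th : params k m) (y : 'cV[R]_k) : R :=
  \sum_(j < m) (if `[< A j (rot th *m (y - ctr th)) >] then 1 else 0)
     * pnorm (expo th j) (rot th *m dmx th j *m (y - ctr th)).

Definition volsum (th : params k m) : \bar R :=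
  (\sum_(j < m) (ballvol k (expo th j))%:E * detinv (dmx th j))%E.
Definition Vol (th : params k m) : \bar R := ((m%:R^-1)%:E * volsum th)%E.

Definition sigma_r (n r : nat) (a : 'I_n -> R) : R :=
  nth 0 (sort (fun u v : R => v <= u) [seq a i | i <- enum 'I_n]) r.-1.

Definition admissible (th : params k m) : Prop :=
  SO (rot th) /\ (forall j, psd_diag (dmx th j)) /\ (forall j, 0 < expo th j).

Variables (n r : nat) (y : 'I_n -> 'cV[R]_k).

Definition feasibleA (th : params k m) : Prop :=
  admissible th /\ (n - r + 1 <= #|[set i : 'I_n | (dist th (y i) <= 1)%R]|)%N.

Definition elog (x : \bar R) : \bar R :=
  match x with
  | EFin a => if 0 < a then (ln a)%:E else -oo%E
  | +oo%E => +oo%E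
  | -oo%E => -oo%E
  end.

Definition objB (th : params k m) : \bar R :=
  if volsum th == +oo%E then +oo%E
  else (k%:R%:E * elog (sigma_r r (fun i => dist th (y i)))%:E + elog (volsum th))%E.

Definition optA (th : params k m) : Prop :=
  feasibleA th /\ forall th', feasibleA th' -> (Vol th <= Vol th')%E.
Definition optB (th : params k m) : Prop :=
  admissible th /\ forall th', admissible th' -> (objB th <= objB th')%E.

Definition rescale (th : params k m) : params k m :=
  Params (rot th) (ctr th)
    (fun j => (sigma_r r (fun i => dist th (y i)))^-1 *: dmx th j) (expo th).

End Defs.

From Pilot Require Import Defs.
From HB Require Import structures.
From mathcomp Require Import all_boot all_order all_algebra.
From mathcomp Require Import all_classical all_reals all_analysis.
From mathcomp Require Import ring measurable_realfun.
Set Implicit Arguments.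
Unset Strict Implicit.
Unset Printing Implicit Defensive.
Import Order.TTheory GRing.Theory Num.Theory.
Local Open Scope classical_set_scope.
Local Open Scope ring_scope.

(* Multiplying every D_j by c > 0 multiplies every distance d(y_i, .), hence
   the order statistic sigma_r, by c, and divides the volume sum by c^k.  So
   exp of the objective of (B), which is sigma_r^k times the volume sum, is
   scale invariant, while the constraint of (A) says exactly sigma_r <= 1.
   Every feasible point of (A) therefore has volume sum at least exp(objB),
   with equality after rescaling the D_j by 1/sigma_r; this gives the equality
   of the optimal values and the correspondence of optimizers.  The only
   analytic input is Gamma > 0, which makes every ball volume positive. *)

Section Gamma_positive.
Variable R : realType.

Definition Gamma_integrand (s t : R) : R := t `^ (s - 1) * expR (- t).

Lemma powR_le_expR_half (a t : R) : 0 <= a -> 0 <= t ->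
  t `^ a <= (2 * (Num.truncn a).+1)%:R ^+ (Num.truncn a).+1 * expR (t / 2).
Proof.
move=> a0 t0; set N := (Num.truncn a).+1.
have N0 : 0 < (2 * N)%:R :> R by rewrite ltr0n muln_gt0.
have t1 : 1 <= 1 + t by rewrite lerDl.
apply: (@le_trans _ _ ((1 + t) ^+ N)).
  rewrite -powR_mulrn ?(le_trans ler01 t1) //.
  apply: le_trans (ler_powR t1 (ltW (truncnS_gt a))).
  by apply: ge0_ler_powR; rewrite ?nnegrE ?(le_trans ler01 t1) ?lerDr.
have -> : t / 2 = N%:R * (t / (2 * N)%:R).
  by rewrite natrM; field; rewrite pnatr_eq0.
rewrite expRM_natl -exprMn; apply: lerXn2r; rewrite ?nnegrE ?(le_trans ler01 t1) //.
apply: (@le_trans _ _ ((2 * N)%:R * (1 + t / (2 * N)%:R))).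
  by rewrite mulrDr mulr1 mulrC divfK ?gt_eqF // lerD2r ler1n muln_gt0.
by rewrite ler_pM2l // expR_ge1Dx.
Qed.

Lemma measurable_Gamma_integrand (s : R) : measurable_fun setT (Gamma_integrand s).
Proof.
apply: measurable_funM; first exact: measurable_powR.
by apply: measurableT_comp; [exact: measurable_expR | exact: oppr_measurable].
Qed.

Lemma Gamma_integrand_ge0 (s t : R) : 0 <= Gamma_integrand s t.
Proof. by rewrite mulr_ge0 ?powR_ge0 ?expR_ge0. Qed.

Local Notation I s :=
  (\int[lebesgue_measure]_(t in `[0%R, +oo[) (Gamma_integrand s t)%:E)%E.

Lemma Gamma_integral_gt0 (s : R) : 1 <= s -> (0 < I s)%E.
Proof.
move=> s1.
apply: (@lt_le_trans _ _ (\int[lebesgue_measure]_(t in `[1%R, 2%R]) (expR (-2))%:E)%E).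
  rewrite integral_cst //; have /= -> := lebesgue_measure_itv `[1%R, 2%R].
  by rewrite lte_fin ltr1n -EFinD mule_gt0 // lte_fin ?expR_gt0 // subr_gt0 ltr1n.
apply: (@le_trans _ _
  (\int[lebesgue_measure]_(t in `[1%R, 2%R]) (Gamma_integrand s t)%:E)%E).
  apply: ge0_le_integral => //.
  - by apply/measurable_EFinP; apply: measurable_funS (measurable_Gamma_integrand s).
  - move=> t /=; rewrite in_itv /= => /andP[t1 t2].
    rewrite lee_fin /Gamma_integrand -[X in X <= _]mul1r.
    apply: ler_pM; rewrite ?ler01 ?expR_ge0 //.
      by rewrite -[leLHS](powRr0 t) ler_powR // subr_ge0.
    by rewrite ler_expR lerN2.
apply: ge0_subset_integral => //.
- by apply/measurable_EFinP; apply: measurable_funS (measurable_Gamma_integrand s).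
- by move=> t _; rewrite lee_fin Gamma_integrand_ge0.
- by move=> t /=; rewrite !in_itv /= => /andP[t1 _]; rewrite (le_trans _ t1).
Qed.

Lemma Gamma_integral_lty (s : R) : 1 <= s -> (I s < +oo)%E.
Proof.
move=> s1; set a := s - 1.
set C := (2 * (Num.truncn a).+1)%:R ^+ (Num.truncn a).+1 : R.
have a0 : 0 <= a by rewrite subr_ge0.
have C0 : 0 <= C by rewrite exprn_ge0.
have rate0 : 0 < 2^-1 :> R by rewrite invr_gt0.
have mE : measurable_fun setT (EFin \o exponential_pdf (2^-1 : R)).
  by apply/measurable_EFinP; exact: measurable_exponential_pdf.
have E0 t : (0 <= (exponential_pdf (2^-1 : R) t)%:E)%E.
  by rewrite lee_fin exponential_pdf_ge0 // ltW.
apply: (@le_lt_trans _ _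
  (\int[lebesgue_measure]_(t in `[0%R, +oo[)
     ((2 * C)%:E * (exponential_pdf (2^-1 : R) t)%:E))%E).
  apply: ge0_le_integral => //.
  - by move=> t _; rewrite lee_fin Gamma_integrand_ge0.
  - by apply/measurable_EFinP; apply: measurable_funS (measurable_Gamma_integrand s).
  - by apply: emeasurable_funM => //; exact: measurable_funS mE.
  - move=> t /=; rewrite in_itv /= andbT => t0.
    rewrite -EFinM lee_fin exponential_pdfE // /Gamma_integrand.
    apply: le_trans (ler_wpM2r (expR_ge0 (- t)) (powR_le_expR_half a0 t0)) _.
    rewrite -/C -mulrA -expRD (_ : t / 2 + - t = - 2^-1 * t); last by field.
    by rewrite le_eqVlt; apply/orP; left; apply/eqP; field.
rewrite ge0_integralZl //; last 2 first.
- exact: measurable_funS mE.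
- by rewrite lee_fin mulr_ge0.
apply: (@le_lt_trans _ _
  ((2 * C)%:E * \int[lebesgue_measure]_t (exponential_pdf (2^-1 : R) t)%:E))%E.
  by apply: lee_wpmul2l; [rewrite lee_fin mulr_ge0 | exact: ge0_subset_integral].
by rewrite integral_exponential_pdf // mule1 ltry.
Qed.

Lemma Gamma_gt0 (s : R) : 1 <= s -> 0 < Gamma s.
Proof.
by move=> s1; apply: fine_gt0; rewrite Gamma_integral_gt0 ?Gamma_integral_lty.
Qed.

Lemma ballvol_gt0 (k : nat) (p : R) : 0 < p -> 0 < ballvol k p.
Proof.
move=> p0; rewrite /ballvol divr_gt0 ?mulr_gt0 ?exprn_gt0 // Gamma_gt0 //.
  by rewrite lerDl invr_ge0 ltW.
by rewrite lerDl divr_ge0 // ltW.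
Qed.

End Gamma_positive.

Lemma pnormZ (R : realType) k (p c : R) (z : 'cV[R]_k) : 0 < p -> 0 < c ->
  pnorm p (c *: z) = c * pnorm p z.
Proof.
move=> p0 c0; rewrite /pnorm.
under eq_bigr do rewrite mxE normrM (gtr0_norm c0) powRM ?(ltW c0) //.
rewrite -mulr_sumr powRM ?powR_ge0 //; last by rewrite sumr_ge0 // => *; exact: powR_ge0.
by rewrite -powRrM mulfV ?gt_eqF // powRr1 // ltW.
Qed.

Section order_statistic.
Variable R : realType.
Implicit Types (s : seq R) (t : R).

Lemma sigma_r_ge0 n r (a : 'I_n -> R) : (forall i, 0 <= a i) -> 0 <= sigma_r r a.
Proof.
move=> a0; rewrite /sigma_r; set s := sort _ _.
have [ltr|geq] := ltnP r.-1 (size s); last by rewrite nth_default.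
have : nth 0 s r.-1 \in s by exact: mem_nth.
by rewrite mem_sort => /mapP[i _ ->].
Qed.

Lemma sigma_rZ n r (a : 'I_n -> R) c : 0 < c ->
  sigma_r r (fun i => c * a i) = c * sigma_r r a.
Proof.
move=> c0; rewrite /sigma_r (map_comp ( *%R c) a) [in LHS]sort_map.
have -> : (relpre ( *%R c) (fun u v : R => v <= u) : rel R) = fun u v => v <= u.
  by apply/funext => u; apply/funext => v /=; rewrite ler_pM2l.
set s := sort _ _; have [ltr|geq] := ltnP r.-1 (size s).
  by rewrite (nth_map 0).
by rewrite !nth_default ?size_map // mulr0.
Qed.

(* In a nonincreasing sequence the entries below [t] form a suffix. *)
Lemma count_le_sorted_ge s t i : sorted >=%R s -> (i < size s)%N ->
  (size s - i <= count (<= t) s)%N = (nth 0 s i <= t).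
Proof.
move=> ss isz.
have nth_ge j l : (j <= l < size s)%N -> nth 0 s l <= nth 0 s j.
  move=> /andP[jl ls]; apply: (sorted_leq_nth ge_trans lexx) => //.
  by rewrite inE (leq_ltn_trans jl).
have [le_t|gt_t] := leP (nth 0 s i) t.
  have : all (<= t) (drop i s).
    apply/(all_nthP 0) => j; rewrite size_drop => jsz.
    by rewrite nth_drop; apply: le_trans le_t; rewrite nth_ge // leq_addr -ltn_subRL.
  rewrite all_count size_drop => /eqP <-.
  by rewrite -[in X in (_ <= X)%N](cat_take_drop i s) count_cat leq_addl.
apply/negbTE; rewrite -ltnNge -[in X in (X < _)%N](cat_take_drop i.+1 s) count_cat.
have -> : count (<= t) (take i.+1 s) = 0%N.
  apply/eqP; rewrite -leqn0 leqNgt -has_count; apply/negP => /(has_nthP 0)[j].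
  rewrite size_take_min leq_min ltnS => /andP[ji _].
  rewrite nth_take ?ltnS //; apply/negP.
  by rewrite -ltNge (lt_le_trans gt_t) // nth_ge // ji.
by rewrite add0n (leq_ltn_trans (count_size _ _)) // size_drop subnSK.
Qed.

Lemma sigma_r_le n r (a : 'I_n -> R) t : (1 <= r <= n)%N ->
  (n - r + 1 <= #|[set i | (a i <= t)%R]|)%N = (sigma_r r a <= t).
Proof.
case: r => // r /andP[_ r_lt_n]; rewrite /sigma_r /=; set s := sort _ _.
have sz : size s = n by rewrite size_sort size_map size_enum_ord.
have -> : #|[set i | (a i <= t)%R]| = count (<= t) s.
  rewrite (permP (permEl (perm_sort _ _))) count_map cardE /enum_mem.
  rewrite size_filter count_filter.
  by apply: eq_count => i; rewrite !inE andbT; apply/idP/idP => [/set_mem|/mem_set].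
rewrite -count_le_sorted_ge ?sz ?addn1 ?subnSK //.
by apply: sort_sorted => u v; exact: le_total.
Qed.

End order_statistic.

Lemma detinv_gt0 (R : realType) k (D : 'M[R]_k) : psd_diag D -> (0 < detinv D)%E.
Proof.
move=> [/diag_mxP[d ->] d_ge0]; rewrite /detinv det_diag; case: ifPn => // d_neq0.
rewrite lte_fin invr_gt0 lt_def d_neq0 prodr_ge0 // => i _.
by have := d_ge0 i; rewrite mxE eqxx mulr1n.
Qed.

Lemma detinv_scale (R : realType) k (D : 'M[R]_k) c : 0 < c ->
  detinv (c *: D) = (((c ^+ k)^-1)%:E * detinv D)%E.
Proof.
move=> c0; rewrite /detinv detZ mulf_eq0 expf_eq0 (gt_eqF c0) andbF /=.
case: ifP => _; first by rewrite gt0_muley // lte_fin invr_gt0 exprn_gt0.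
by rewrite -EFinM invfM.
Qed.

Section ereal_inf_facts.
Variable R : realType.
Local Open Scope ereal_scope.

Lemma ereal_inf_expeR (S : set (\bar R)) :
  ereal_inf (expeR @` S) = expeR (ereal_inf S).
Proof.
apply/le_anti/andP; split; last first.
  by apply/ereal_infP => _ [x Sx <-]; rewrite lee_expeR; exact: ereal_inf_lbound.
set I := ereal_inf _.
have lneIK : expeR (lne I) = I.
  by apply/eqP; rewrite lneK_eq; apply/ereal_infP => _ [x _ <-]; exact: expeR_ge0.
rewrite -lneIK lee_expeR; apply/ereal_infP => x Sx.
by rewrite -lee_expeR lneIK; apply: ereal_inf_lbound; exists x.
Qed.

Lemma le0_of_le_divXn (x : \bar R) (v : R) (k : nat) : (0 < k)%N ->
  (forall c, (1 <= c)%R -> x <= (v / c ^+ k)%:E) -> x <= 0.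
Proof.
move=> k_gt0 x_le; apply/lee_addgt0Pr => e e_gt0; rewrite add0e.
set c := (`|v| / e + 1)%R.
have c_ge1 : (1 <= c)%R by rewrite lerDr divr_ge0 // ltW.
have c_gt0 : (0 < c)%R := lt_le_trans ltr01 c_ge1.
apply: (le_trans (x_le c c_ge1)); rewrite lee_fin.
apply: (@le_trans _ _ (`|v| / c ^+ k)%R).
  by apply: ler_wpM2r; [rewrite invr_ge0 exprn_ge0 // ltW | exact: ler_norm].
apply: (@le_trans _ _ (`|v| / c)%R).
  by apply: ler_wpM2l => //; rewrite lef_pV2 ?posrE ?exprn_gt0 ?ler_eXnr.
by rewrite ler_pdivrMr // /c mulrDr mulr1 mulrC divfK ?gt_eqF // lerDl ltW.
Qed.

End ereal_inf_facts.

Definition scale_dmx (R : realType) k m (th : params R k m) (c : R) : params R k m :=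
  Params (Defs.rot th) (ctr th) (fun j => c *: dmx th j) (expo th).

Lemma scale_dmx_dim0 (R : realType) k m (th : params R k m) c : k = 0%N ->
  scale_dmx th c = th.
Proof.
move=> k0; subst k; case: th => Q mu D p.
by congr Params; apply/funext => j; rewrite !flatmx0.
Qed.

Section problem.
Variables (R : realType) (k m : nat) (A : 'I_m -> set 'cV[R]_k).
Variables (n r : nat) (y : 'I_n -> 'cV[R]_k).
Hypotheses (r_range : (1 <= r <= n)%N) (m_gt0 : (0 < m)%N).
Implicit Types (th : params R k m) (c : R).

Local Notation sigma th := (sigma_r r (fun i => dist A th (y i))).
Local Notation feasible := (feasibleA A r y).
Local Notation objB := (objB A r y).

Lemma dist_ge0 th x : 0 <= dist A th x.
Proof. by rewrite sumr_ge0 // => j _; rewrite mulr_ge0 ?powR_ge0 //; case: ifP. Qed.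

Lemma sigma_ge0 th : 0 <= sigma th.
Proof. by apply: sigma_r_ge0 => i; exact: dist_ge0. Qed.

Lemma sigma_scale th c : admissible th -> 0 < c -> sigma (scale_dmx th c) = c * sigma th.
Proof.
move=> [_ [_ p_gt0]] c_gt0; rewrite -sigma_rZ //; congr sigma_r; apply/funext => i.
rewrite /dist mulr_sumr; apply: eq_bigr => j _ /=.
by rewrite -scalemxAr -scalemxAl pnormZ // mulrCA.
Qed.

Lemma admissible_scale th c : admissible th -> 0 <= c -> admissible (scale_dmx th c).
Proof.
move=> [SOQ [D_psd p_gt0]] c_ge0; split=> //; split=> // j /=.
have [/is_diag_mxP D_diag D_ge0] := D_psd j.
split; last by move=> i; rewrite mxE mulr_ge0.
by apply/is_diag_mxP => i l il; rewrite mxE D_diag // mulr0.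
Qed.

Lemma volsum_scale th c : admissible th -> 0 < c ->
  volsum (scale_dmx th c) = (((c ^+ k)^-1)%:E * volsum th)%E.
Proof.
move=> [_ [D_psd p_gt0]] c_gt0; rewrite /volsum ge0_sume_distrr => [|j _]; last first.
  by rewrite mule_ge0 // ?lee_fin ?ltW ?ballvol_gt0 ?detinv_gt0.
by apply: eq_bigr => j _ /=; rewrite detinv_scale // muleCA.
Qed.

Lemma volsum_gt0 th : admissible th -> (0 < volsum th)%E.
Proof.
move=> [_ [D_psd p_gt0]]; rewrite /volsum (bigD1 (Ordinal m_gt0)) //=.
have term_gt0 j : (0 < (ballvol k (expo th j))%:E * detinv (dmx th j))%E.
  by rewrite mule_gt0 ?lte_fin ?ballvol_gt0 ?detinv_gt0.
apply: lt_le_trans (term_gt0 (Ordinal m_gt0)) _.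
by rewrite leeDl // sume_ge0 // => j _; rewrite ltW.
Qed.

Lemma feasibleAP th : feasible th <-> admissible th /\ sigma th <= 1.
Proof. by rewrite /feasibleA sigma_r_le. Qed.

Lemma feasibleA_scale th c : admissible th -> 0 < c -> c * sigma th <= 1 ->
  feasible (scale_dmx th c).
Proof.
move=> adm c_gt0 le1; apply/feasibleAP.
by rewrite sigma_scale //; split=> //; apply: admissible_scale => //; exact: ltW.
Qed.

Lemma expeR_objB th v : volsum th = v%:E -> 0 < v ->
  expeR (objB th) = (sigma th ^+ k * v)%:E.
Proof.
move=> vE v_gt0; rewrite /objB vE /= v_gt0.
have [s_gt0|] := ltP 0 (sigma th).
  by rewrite -EFinM -EFinD /= expRD expRM_natl !lnK.
rewrite le_eqVlt ltNge sigma_ge0 orbF => /eqP ->.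
case: k => [|k']; first by rewrite mul0e add0e /= lnK // mul1r.
by rewrite gt0_muleNy ?lte_fin ?ltr0n // addNye /= expr0n mul0r.
Qed.

Lemma expeR_objB_le_volsum th : feasible th -> (expeR (objB th) <= volsum th)%E.
Proof.
move=> /feasibleAP[adm s_le1]; have := volsum_gt0 adm.
case E: (volsum th) => [v||] //= v_gt0; last exact: leey.
rewrite (expeR_objB E v_gt0) lee_fin ler_piMl ?exprn_ile1 ?sigma_ge0 //.
exact: ltW.
Qed.

Lemma feasibleA_rescale th : admissible th -> objB th \is a fin_num ->
  feasible (rescale A r y th) /\ volsum (rescale A r y th) = expeR (objB th).
Proof.
move=> adm; have := volsum_gt0 adm.
case E: (volsum th) => [v||] //= v_gt0; last by rewrite /objB E eqxx.
have -> : rescale A r y th = scale_dmx th (sigma th)^-1 by [].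
have objBE := expeR_objB E v_gt0; rewrite objBE.
have [s_gt0 _|] := ltP 0 (sigma th).
  split; first by apply: feasibleA_scale; rewrite ?invr_gt0 ?mulVf ?gt_eqF.
  by rewrite volsum_scale ?invr_gt0 // E -EFinM exprVn invrK.
(* [sigma th = 0]: [rescale] multiplies by the junk value [0^-1 = 0], which is
   harmless only for [k = 0]; for [k > 0] the objective is [-oo]. *)
rewrite le_eqVlt ltNge sigma_ge0 orbF => /eqP s0; rewrite s0 expr0n in objBE *.
case: eqP objBE => [k0 _ _|_ /eqP]; last by rewrite mul0r expeR_eq0 => /eqP ->.
rewrite scale_dmx_dim0 // mul1r -E; split=> //.
by apply/feasibleAP; split=> //; rewrite s0 ler01.
Qed.

Lemma ereal_inf_volsum_le th : admissible th ->
  (ereal_inf [set volsum th' | th' in feasible] <= expeR (objB th))%E.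
Proof.
move=> adm; have := volsum_gt0 adm.
case E: (volsum th) => [v||] //= v_gt0; last by rewrite /objB E eqxx leey.
have inf_le c : 0 < c -> c * sigma th <= 1 ->
    (ereal_inf [set volsum th' | th' in feasible] <= ((c ^+ k)^-1 * v)%:E)%E.
  move=> c_gt0 le1; apply: ereal_inf_lbound.
  by exists (scale_dmx th c); [exact: feasibleA_scale | rewrite volsum_scale // E].
rewrite (expeR_objB E v_gt0); have [s_gt0|] := ltP 0 (sigma th).
  rewrite -[sigma th]invrK exprVn.
  by apply: inf_le; rewrite ?invr_gt0 ?mulVf ?gt_eqF.
rewrite le_eqVlt ltNge sigma_ge0 orbF => /eqP s0; rewrite s0 expr0n.
have [k0|k_gt0] := posnP k.
  apply: le_trans (inf_le 1 ltr01 _) _; first by rewrite s0 mulr0 ler01.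
  by rewrite expr1n invr1.
(* For [k > 0] the bound [0] is only approached, by letting [c] grow. *)
rewrite mul0r; apply: (le0_of_le_divXn (v := v) k_gt0) => c c_ge1.
rewrite mulrC; apply: inf_le; rewrite ?s0 ?mulr0 //.
exact: lt_le_trans ltr01 c_ge1.
Qed.

Lemma ereal_inf_volsum : ereal_inf [set volsum th | th in feasible] =
  expeR (ereal_inf [set objB th | th in @admissible R k m]).
Proof.
rewrite -ereal_inf_expeR image_comp; apply/le_anti/andP; split.
  by apply/ereal_infP => _ [th adm <-]; exact: ereal_inf_volsum_le.
apply/ereal_infP => _ [th fth <-]; apply: le_trans (expeR_objB_le_volsum fth).
by apply: ereal_inf_lbound; exists th => //; case: fth.
Qed.

End problem.

Theorem proposition2 (R : realType) (k n m r : nat) (y : 'I_n -> 'cV[R]_k)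
  (A : 'I_m -> set 'cV[R]_k) :
  (1 <= r <= n)%N ->
  (forall i j : 'I_m, i != j -> A i `&` A j = set0) ->
  \bigcup_(j in setT) A j = setT ->
  [/\ ereal_inf [set Vol th | th in feasibleA A r y]
        = ((m%:R^-1)%:E * expeR (ereal_inf [set objB A r y th | th in @admissible R k m]))%E,
      forall th, optA A r y th -> optB A r y th
    & forall th, optB A r y th -> objB A r y th \is a fin_num ->
        optA A r y (rescale A r y th)].
Proof.
move=> r_range _ A_cover.
have m_gt0 : (0 < m)%N.
  rewrite lt0n; apply/eqP => m0; subst m.
  have : [set: 'cV[R]_k] 0 by [].
  by rewrite -A_cover => -[[]].
have minv_gt0 : 0 < m%:R^-1 :> R by rewrite invr_gt0 ltr0n.
have lee_Vol (th th' : params R k m) :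
    (Vol th <= Vol th')%E = (volsum th <= volsum th')%E.
  by rewrite /Vol lee_pmul2l ?lte_fin.
have inf_volsum := ereal_inf_volsum A y r_range m_gt0.
split.
- by rewrite -inf_volsum -ereal_inf_pZl // image_comp.
- move=> th [fth th_min]; split=> [|th' adm']; first by case: fth.
  rewrite -lee_expeR (le_trans (expeR_objB_le_volsum r_range m_gt0 fth)) //.
  apply: le_trans (ereal_inf_volsum_le A y r_range m_gt0 adm').
  by apply/ereal_infP => _ [th'' fth'' <-]; rewrite -lee_Vol; exact: th_min.
- move=> th [adm th_min] objB_fin.
  have [fth volsumE] := feasibleA_rescale r_range m_gt0 adm objB_fin.
  split=> // th' fth'; rewrite lee_Vol volsumE.
  apply: le_trans (expeR_objB_le_volsum r_range m_gt0 fth').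
  by rewrite lee_expeR th_min //; case: fth'.
Qed.
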